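(* Algorithm Drift (defined in the context) is $3$-competitive for the line chasing problem in $\mathbb{R}^2$: for every initial point $P_0\in\mathbb{R}^2$ and every finite sequence of lines $X_1,\dots,X_m$ in $\mathbb{R}^2$, the path $P_0,P_1,\dots,P_m$ produced by Drift satisfies $\sum_{t=1}^m |P_{t-1}P_t| \le 3\cdot \mathrm{OPT}$, where $\mathrm{OPT}=\min\{\sum_{t=1}^m |A_{t-1}A_t| : A_0=P_0,\ A_t\in X_t \text{ for } t=1,\dots,m\}$.
   Context: $|XY|$ denotes Euclidean distance. Line chasing problem: given an initial point $P_0\in\mathbb{R}^d$ and lines $X_1,\dots,X_m$ revealed one at a time, an online algorithm must, upon seeing $X_t$ (and not the later lines), choose $P_t\in X_t$; its cost is $\sum_{t=1}^m|P_{t-1}P_t|$. An online algorithm is $c$-competitive if its cost is at most $c$ times the optimal offline cost $\mathrm{OPT}$ on every input. Algorithm Drift (in $\mathbb{R}^2$): Let $L$ be the previous request line and $P\in L$ the algorithm's current point (for the first request, $L$ is an arbitrary fixed line through $P_0$). Let $L'$ be the new request, and for $X\in L$ let $\bar X$ denote the orthogonal projection of $X$ onto $L'$. If $L'$ does not intersect $L$ in a single point (i.e. $L'$ is parallel to or equal to $L$), move to $P'=\bar P$. Otherwise let $S=L\cap L'$, $r=|SP|$, $h=|P\bar P|$, $s=|S\bar P|$, and $x=\frac{1}{\sqrt2}(h+s-r)$; move to the point $P'\in L'$ lying on the ray from $S$ through $\bar P$ (or $P'=S$ if $\bar P=S$) with $|SP'|=s-x$. *)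

From Stdlib Require Import Reals Lra.
Open Scope R_scope.

Definition point : Type := (R * R)%type.

Definition dist (p q : point) : R :=
  sqrt ((fst p - fst q) ^ 2 + (snd p - snd q) ^ 2).

(* A line {(x,y) | a x + b y = c}, represented by (a, b, c) with (a,b) <> (0,0). *)
Record line : Type := mkLine { la : R; lb : R; lc : R }.

Definition valid_line (L : line) : Prop := la L <> 0 \/ lb L <> 0.

Definition on_line (X : point) (L : line) : Prop :=
  la L * fst X + lb L * snd X = lc L.

Definition proj (L : line) (X : point) : point :=
  let k := (la L * fst X + lb L * snd X - lc L) / (la L ^ 2 + lb L ^ 2) in
  (fst X - k * la L, snd X - k * lb L).

(* determinant; L and L' meet in a single point iff it is nonzero *)
Definition ldet (L L' : line) : R := la L * lb L' - la L' * lb L.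

(* the intersection point (Cramer's rule), meaningful when ldet L L' <> 0 *)
Definition inter (L L' : line) : point :=
  let D := ldet L L' in
  ((lc L * lb L' - lc L' * lb L) / D, (la L * lc L' - la L' * lc L) / D).

(* One step of Algorithm Drift: previous line L, current point P in L,
   new request L'. *)
Definition drift_step (L : line) (P : point) (L' : line) : point :=
  let Pb := proj L' P in
  if Req_EM_T (ldet L L') 0 then Pb
  else
    let S := inter L L' in
    let r := dist S P in
    let h := dist P Pb in
    let s := dist S Pb in
    let x := (h + s - r) / sqrt 2 in
    if Req_EM_T s 0 then S
    else (fst S + (s - x) / s * (fst Pb - fst S),
          snd S + (s - x) / s * (snd Pb - snd S)).

(* state of Drift after t requests: (last line, current point);
   L0 is the fixed initial line through P0, requests are X 1, X 2, ... *)
Fixpoint drift_state (L0 : line) (P0 : point) (X : nat -> line) (t : nat)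
  : line * point :=
  match t with
  | O => (L0, P0)
  | S t' => let st := drift_state L0 P0 X t' in
            (X t, drift_step (fst st) (snd st) (X t))
  end.

Definition drift_pos (L0 : line) (P0 : point) (X : nat -> line) (t : nat) : point :=
  snd (drift_state L0 P0 X t).

Fixpoint path_cost (A : nat -> point) (m : nat) : R :=
  match m with
  | O => 0
  | S m' => path_cost A m' + dist (A m') (A m)
  end.

(* Amortized analysis with potential [sqrt 3 * |P A|], [A] the offline position: each step
   satisfies |P P'| + sqrt 3 |P' A'| <= sqrt 3 |P A| + 3 |A A'|, and the sum telescopes
   because [P 0 = A 0].  With [Ab] the projection of [A] on the new line,
   [|A A'|^2 = |A Ab|^2 + |Ab A'|^2] and Cauchy-Schwarz give
   [sqrt 3 |Ab A'| + sqrt 6 |A Ab| <= 3 |A A'|], so it suffices to bound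
   [|P P'| + sqrt 3 |P' Ab|] by [sqrt 3 |P A| + sqrt 6 |A Ab|].  For parallel lines this is
   immediate.  Otherwise write [A = S + lam (P - S)]; projection being affine,
   [Ab = S + lam (Pb - S)], and every distance is explicit in [r, s, h], the shift [x] and
   [lam].  The claim then follows from [sqrt (h^2 + x^2) <= sqrt 6 h - sqrt 3 x] and
   [sqrt (h^2 + x^2) <= sqrt 3 (r - s + x)], weighted by [|lam|] and [|1 - lam|]
   (whose sum is at least 1). *)

From Pilot Require Import Defs.
From Stdlib Require Import Reals Lra Psatz Lia.
Open Scope R_scope.

(* [Reals] also exports a [dist], the field of [Metric_Space]. *)
Local Notation dist := Defs.dist.

Definition sqdist (p q : point) : R := (fst p - fst q) ^ 2 + (snd p - snd q) ^ 2.

Definition lerp (S Q : point) (mu : R) : point :=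
  (fst S + mu * (fst Q - fst S), snd S + mu * (snd Q - snd S)).

Lemma sqdist_nonneg p q : 0 <= sqdist p q.
Proof.
  unfold sqdist; pose proof (pow2_ge_0 (fst p - fst q)); pose proof (pow2_ge_0 (snd p - snd q)).
  lra.
Qed.

Lemma sqdist_sym p q : sqdist p q = sqdist q p.
Proof. unfold sqdist; ring. Qed.

Lemma sqdist_eq0 p q : sqdist p q = 0 -> p = q.
Proof.
  destruct p as [p1 p2], q as [q1 q2]; unfold sqdist; cbn [fst snd]; intros H.
  pose proof (pow2_ge_0 (p1 - q1)); pose proof (pow2_ge_0 (p2 - q2)).
  assert (p1 = q1) by nra. assert (p2 = q2) by nra. congruence.
Qed.

Lemma dist_sqdist p q : dist p q = sqrt (sqdist p q).
Proof. reflexivity. Qed.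

Lemma dist_nonneg p q : 0 <= dist p q.
Proof. apply sqrt_pos. Qed.

Lemma dist_sq p q : dist p q ^ 2 = sqdist p q.
Proof. apply pow2_sqrt, sqdist_nonneg. Qed.

Lemma dist_self p : dist p p = 0.
Proof. rewrite dist_sqdist; replace (sqdist p p) with 0 by (unfold sqdist; ring); apply sqrt_0. Qed.

Lemma dist_triangle p q r : dist p r <= dist p q + dist q r.
Proof.
  assert (E : forall u v, dist u v = dist_euc (fst u) (snd u) (fst v) (snd v))
    by (intros; unfold Defs.dist, dist_euc; rewrite !Rsqr_pow2; reflexivity).
  rewrite !E; apply triangle.
Qed.

Lemma dist_scale p q p' q' k : sqdist p q = k ^ 2 * sqdist p' q' -> dist p q = Rabs k * dist p' q'.
Proof.
  intros H. rewrite dist_sqdist, H, <- dist_sq, <- pow2_abs, <- Rpow_mult_distr.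
  apply sqrt_pow2, Rmult_le_pos; [apply Rabs_pos | apply dist_nonneg].
Qed.

Lemma sqrt_le_of_le_sq a b : 0 <= b -> a <= b ^ 2 -> sqrt a <= b.
Proof. intros Hb H; rewrite <- (sqrt_pow2 b Hb); apply sqrt_le_1_alt, H. Qed.

Lemma one_le_sqrt x : 1 <= x -> 1 <= sqrt x.
Proof. intros H; rewrite <- sqrt_1; apply sqrt_le_1_alt, H. Qed.

Lemma line_normal_pos L : valid_line L -> 0 < la L ^ 2 + lb L ^ 2.
Proof. intros [H|H]; pose proof (pow2_ge_0 (la L)); pose proof (pow2_ge_0 (lb L)); nra. Qed.

Lemma proj_on_line L Q : valid_line L -> on_line (proj L Q) L.
Proof.
  intros HL; pose proof (line_normal_pos L HL).
  destruct L as [a b c], Q as [q1 q2]; unfold on_line, proj; cbn in *.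
  field; lra.
Qed.

Lemma sqdist_proj L Q Z : valid_line L -> on_line Z L ->
  sqdist Q Z = sqdist Q (proj L Q) + sqdist (proj L Q) Z.
Proof.
  intros HL HZ; pose proof (line_normal_pos L HL).
  destruct L as [a b c], Q as [q1 q2], Z as [z1 z2]; unfold on_line, proj, sqdist in *; cbn in *.
  rewrite <- HZ; field; lra.
Qed.

Lemma dist_proj_pythagoras L Q Z : valid_line L -> on_line Z L ->
  dist Z Q ^ 2 = dist Z (proj L Q) ^ 2 + dist Q (proj L Q) ^ 2.
Proof.
  intros HL HZ; rewrite !dist_sq, sqdist_sym, (sqdist_proj L Q Z HL HZ), (sqdist_sym Z); ring.
Qed.

Lemma inter_on_line L L' : ldet L L' <> 0 -> on_line (inter L L') L /\ on_line (inter L L') L'.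
Proof.
  intros HD; destruct L as [a b c], L' as [a' b' c']; unfold on_line, inter, ldet in *; cbn in *.
  split; field; exact HD.
Qed.

Lemma lerp0 S Q : lerp S Q 0 = S.
Proof. destruct S; unfold lerp; cbn; f_equal; ring. Qed.

Lemma lerp_on_line L S Q mu : on_line S L -> on_line Q L -> on_line (lerp S Q mu) L.
Proof.
  destruct L as [a b c], S as [s1 s2], Q as [q1 q2]; unfold on_line, lerp; cbn.
  intros HS HQ.
  transitivity (a * s1 + b * s2 + mu * ((a * q1 + b * q2) - (a * s1 + b * s2))); [ring|].
  rewrite HS, HQ; ring.
Qed.

Lemma proj_lerp L S P lam : valid_line L -> on_line S L ->
  proj L (lerp S P lam) = lerp S (proj L P) lam.
Proof.
  intros HL HS; pose proof (line_normal_pos L HL).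
  destruct L as [a b c], S as [s1 s2], P as [p1 p2]; unfold on_line, proj, lerp in *; cbn in *.
  rewrite <- HS; f_equal; field; lra.
Qed.

Lemma cross_eq0_of_perp u1 u2 v1 v2 w1 w2 : u1 <> 0 \/ u2 <> 0 ->
  u1 * v1 + u2 * v2 = 0 -> u1 * w1 + u2 * w2 = 0 -> v1 * w2 - v2 * w1 = 0.
Proof.
  intros [Hu|Hu] Hv Hw.
  - apply (Rmult_eq_reg_l u1); [|exact Hu].
    transitivity (w2 * (u1 * v1 + u2 * v2) - v2 * (u1 * w1 + u2 * w2)); [ring|].
    rewrite Hv, Hw; ring.
  - apply (Rmult_eq_reg_l u2); [|exact Hu].
    transitivity (v1 * (u1 * w1 + u2 * w2) - w1 * (u1 * v1 + u2 * v2)); [ring|].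
    rewrite Hv, Hw; ring.
Qed.

Lemma collinear_multiple v1 v2 w1 w2 : 0 < v1 ^ 2 + v2 ^ 2 -> v1 * w2 - v2 * w1 = 0 ->
  exists lam, w1 = lam * v1 /\ w2 = lam * v2.
Proof.
  intros Hv Hcross; exists ((w1 * v1 + w2 * v2) / (v1 ^ 2 + v2 ^ 2)).
  split; apply (Rmult_eq_reg_r (v1 ^ 2 + v2 ^ 2)); try lra.
  - transitivity ((w1 * v1 + w2 * v2) * v1 - v2 * (v1 * w2 - v2 * w1)); [ring|].
    rewrite Hcross; field; lra.
  - transitivity ((w1 * v1 + w2 * v2) * v2 + v1 * (v1 * w2 - v2 * w1)); [ring|].
    rewrite Hcross; field; lra.
Qed.

Lemma on_line_lerp L S P A : valid_line L -> on_line S L -> on_line P L -> on_line A L ->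
  P <> S -> exists lam, A = lerp S P lam.
Proof.
  intros HL HS HP HA HPS.
  assert (HN : 0 < sqdist P S).
  { destruct (sqdist_nonneg P S) as [H|H]; [exact H|].
    exfalso; apply HPS, sqdist_eq0; congruence. }
  destruct L as [a b c], S as [s1 s2], P as [p1 p2], A as [x1 x2];
    unfold on_line, sqdist, lerp, valid_line in *; cbn in *.
  destruct (collinear_multiple (p1 - s1) (p2 - s2) (x1 - s1) (x2 - s2)) as [lam [E1 E2]].
  - exact HN.
  - apply (cross_eq0_of_perp a b); [exact HL | lra | lra].
  - exists lam; f_equal; lra.
Qed.

Lemma dist_proj_parallel L L' P A : valid_line L -> valid_line L' -> ldet L L' = 0 ->
  on_line P L -> on_line A L ->
  dist P (proj L' P) = dist A (proj L' A) /\ dist (proj L' P) (proj L' A) = dist P A.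
Proof.
  intros HL HL' HD HP HA; pose proof (line_normal_pos L' HL') as HN.
  rewrite !dist_sqdist.
  destruct L as [a b c], L' as [a' b' c'], P as [p1 p2], A as [x1 x2];
    unfold on_line, sqdist, valid_line, ldet, proj in *; cbn in *.
  assert (Hperp : a' * (p1 - x1) + b' * (p2 - x2) = 0).
  { assert (H := cross_eq0_of_perp a b (p1 - x1) (p2 - x2) b' (- a') HL ltac:(lra) ltac:(lra)).
    lra. }
  replace (a' * p1 + b' * p2) with (a' * x1 + b' * x2) by lra.
  split; f_equal; ring.
Qed.

Lemma point_eq_dec (p q : point) : {p = q} + {p <> q}.
Proof.
  destruct p as [p1 p2], q as [q1 q2].
  destruct (Req_EM_T p1 q1), (Req_EM_T p2 q2); [left | right | right | right]; congruence.
Qed.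

Lemma proj_on_line_id L Q : valid_line L -> on_line Q L -> proj L Q = Q.
Proof.
  intros HL HQ; pose proof (line_normal_pos L HL).
  destruct L as [a b c], Q as [q1 q2]; unfold on_line, proj in *; cbn in *.
  rewrite HQ, Rminus_diag; f_equal; field; lra.
Qed.

Lemma lerp_same S mu : lerp S S mu = S.
Proof. destruct S; unfold lerp; cbn; f_equal; ring. Qed.

Definition drift_shift (r s h : R) : R := (h + s - r) / sqrt 2.

Section DriftShift.

Variables r s h : R.
Hypotheses (Hs : 0 <= s) (Hh : 0 <= h) (Hr : 0 <= r) (Hpyth : r ^ 2 = s ^ 2 + h ^ 2).

Local Notation x := (drift_shift r s h).

Lemma pythagoras_sides : s <= r /\ h <= r /\ r <= s + h.
Proof. repeat split; nra. Qed.

Lemma sqrt2_mul_drift_shift : sqrt 2 * x = h + s - r.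
Proof. unfold drift_shift; field; apply Rgt_not_eq, sqrt_lt_R0; lra. Qed.

Lemma drift_shift_bounds : 0 <= x <= h + s - r.
Proof.
  pose proof sqrt2_mul_drift_shift; pose proof pythagoras_sides.
  pose proof (one_le_sqrt 2 ltac:(lra)); nra.
Qed.

Lemma drift_shift_sq : 2 * x ^ 2 = (h + s - r) ^ 2.
Proof. rewrite <- sqrt2_mul_drift_shift, Rpow_mult_distr, pow2_sqrt; lra. Qed.

Lemma leg_shift_le_height : sqrt (h ^ 2 + x ^ 2) <= sqrt 2 * sqrt 3 * h - sqrt 3 * x.
Proof.
  pose proof sqrt2_mul_drift_shift; pose proof drift_shift_sq.
  destruct drift_shift_bounds as [Hx0 Hxy].
  destruct pythagoras_sides as (Hsr & Hhr & Hrsh).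
  pose proof (one_le_sqrt 2 ltac:(lra)); pose proof (one_le_sqrt 3 ltac:(lra)).
  apply sqrt_le_of_le_sq.
  - assert (0 <= sqrt 2 * h - x) by nra. nra.
  - replace ((sqrt 2 * sqrt 3 * h - sqrt 3 * x) ^ 2)
      with (sqrt 3 ^ 2 * (sqrt 2 ^ 2 * h ^ 2 - 2 * h * (sqrt 2 * x) + x ^ 2)) by ring.
    rewrite !pow2_sqrt by lra.
    (* the difference of the two sides is [(5 h - y) (h - y)] with [y = h + s - r] *)
    nra.
Qed.

Lemma leg_shift_le_excess : sqrt (h ^ 2 + x ^ 2) <= sqrt 3 * (r - s + x).
Proof.
  pose proof drift_shift_sq; destruct drift_shift_bounds as [Hx0 Hxy].
  destruct pythagoras_sides as (Hsr & Hhr & Hrsh).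
  pose proof (one_le_sqrt 2 ltac:(lra)).
  apply sqrt_le_of_le_sq; [pose proof (sqrt_pos 3); nra|].
  rewrite Rpow_mult_distr, pow2_sqrt by lra.
  set (d := r - s).
  (* the difference of the two sides is [d (4 d + 6 x - 2 h)] *)
  assert (Hfactor : 0 <= 4 * d + 6 * x - 2 * h).
  { replace (6 * x) with (3 * sqrt 2 * (sqrt 2 * x))
      by (rewrite <- Rmult_assoc, (Rmult_assoc 3), sqrt_sqrt by lra; ring).
    rewrite sqrt2_mul_drift_shift.
    assert (0 <= (3 * sqrt 2 - 2) * (h - d)) by (apply Rmult_le_pos; unfold d; lra).
    unfold d in *; lra. }
  assert (0 <= d * (4 * d + 6 * x - 2 * h))
    by (apply Rmult_le_pos; [unfold d; lra | exact Hfactor]).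
  unfold d in *; nra.
Qed.

Lemma drift_scalar_bound lam :
  sqrt (h ^ 2 + x ^ 2) + sqrt 3 * Rabs (lam * s - (s - x))
  <= sqrt 3 * Rabs (1 - lam) * r + sqrt 2 * sqrt 3 * Rabs lam * h.
Proof.
  pose proof leg_shift_le_height as Hheight; pose proof leg_shift_le_excess as Hexcess.
  destruct drift_shift_bounds as [Hx0 Hxy]; destruct pythagoras_sides as (Hsr & Hhr & Hrsh).
  set (E := sqrt (h ^ 2 + x ^ 2)) in *.
  assert (Habs : Rabs (lam * s - (s - x)) <= x * Rabs lam + (s - x) * Rabs (1 - lam)).
  { replace (lam * s - (s - x)) with (x * lam + (s - x) * (lam - 1)) by ring.
    eapply Rle_trans; [apply Rabs_triang|].
    rewrite !Rabs_mult, (Rabs_pos_eq x), (Rabs_pos_eq (s - x)), (Rabs_minus_sym lam) by lra.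
    lra. }
  set (a := Rabs lam) in *; set (b := Rabs (1 - lam)) in *.
  assert (Hab : 1 <= a + b).
  { rewrite <- Rabs_R1; replace 1 with (lam + (1 - lam)) at 1 by ring; apply Rabs_triang. }
  assert (Ha : 0 <= a) by apply Rabs_pos; assert (Hb : 0 <= b) by apply Rabs_pos.
  assert (HE : 0 <= E) by apply sqrt_pos.
  assert (E * a <= (sqrt 2 * sqrt 3 * h - sqrt 3 * x) * a) by (apply Rmult_le_compat_r; lra).
  assert (E * b <= sqrt 3 * (r - s + x) * b) by (apply Rmult_le_compat_r; lra).
  assert (sqrt 3 * Rabs (lam * s - (s - x)) <= sqrt 3 * (x * a + (s - x) * b))
    by (apply Rmult_le_compat_l; [apply sqrt_pos | exact Habs]).
  nra.
Qed.

End DriftShift.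

Lemma step_bound_of_proj_bound L' P P' A A' : valid_line L' -> on_line A' L' ->
  dist P P' + sqrt 3 * dist P' (proj L' A)
    <= sqrt 3 * dist P A + sqrt 2 * sqrt 3 * dist A (proj L' A) ->
  dist P P' + sqrt 3 * dist P' A' <= sqrt 3 * dist P A + 3 * dist A A'.
Proof.
  intros HL' HA' Hproj.
  set (Ab := proj L' A) in *.
  set (k := dist A Ab) in *; set (u := dist Ab A').
  assert (Hk : 0 <= k) by apply dist_nonneg; assert (Hu : 0 <= u) by apply dist_nonneg.
  assert (Hpyth : dist A A' ^ 2 = k ^ 2 + u ^ 2)
    by (unfold k, u; rewrite !dist_sq; apply sqdist_proj; assumption).
  pose proof (one_le_sqrt 2 ltac:(lra)); pose proof (one_le_sqrt 3 ltac:(lra)).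
  (* Cauchy-Schwarz for the vectors [(sqrt 3, sqrt 6)] and [(u, k)] *)
  assert (Hcs : sqrt 3 * u + sqrt 2 * sqrt 3 * k <= 3 * dist A A').
  { apply Rsqr_incr_0_var; [|pose proof (dist_nonneg A A'); lra].
    rewrite !Rsqr_pow2, Rpow_mult_distr, Hpyth.
    replace ((sqrt 3 * u + sqrt 2 * sqrt 3 * k) ^ 2)
      with (sqrt 3 ^ 2 * (u ^ 2 + 2 * sqrt 2 * u * k + sqrt 2 ^ 2 * k ^ 2)) by ring.
    rewrite !pow2_sqrt by lra.
    assert (Hsq : 0 <= (k - sqrt 2 * u) ^ 2) by apply pow2_ge_0.
    replace ((k - sqrt 2 * u) ^ 2) with (k ^ 2 - 2 * sqrt 2 * u * k + sqrt 2 ^ 2 * u ^ 2) in Hsq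
      by ring.
    rewrite pow2_sqrt in Hsq by lra.
    lra. }
  assert (sqrt 3 * dist P' A' <= sqrt 3 * (dist P' Ab + u))
    by (apply Rmult_le_compat_l; [apply sqrt_pos | apply dist_triangle]).
  lra.
Qed.

Lemma drift_step_cases L P L' : valid_line L' ->
  (ldet L L' = 0 /\ drift_step L P L' = proj L' P) \/
  (ldet L L' <> 0 /\ exists mu,
     drift_step L P L' = lerp (inter L L') (proj L' P) mu /\
     mu * dist (inter L L') (proj L' P) = dist (inter L L') (proj L' P)
       - drift_shift (dist (inter L L') P) (dist (inter L L') (proj L' P)) (dist P (proj L' P))).
Proof.
  intros HL'; unfold drift_step; cbv zeta.
  destruct (Req_EM_T (ldet L L') 0) as [Hd|Hd]; [left; split; auto|right; split; [exact Hd|]].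
  set (S := inter L L'); set (Pb := proj L' P).
  destruct (Req_EM_T (dist S Pb) 0) as [Hs|Hs].
  - exists 0; split; [symmetry; apply lerp0|].
    (* [Pb = S], so [dist S P = dist P Pb] and the shift vanishes *)
    assert (Hrh : dist S P = dist P Pb).
    { pose proof (dist_proj_pythagoras L' P S HL' (proj2 (inter_on_line L L' Hd))).
      fold S Pb in H; rewrite Hs in H.
      pose proof (dist_nonneg S P); pose proof (dist_nonneg P Pb); nra. }
    unfold drift_shift; rewrite Hs, Hrh; unfold Rdiv; ring.
  - exists ((dist S Pb - drift_shift (dist S P) (dist S Pb) (dist P Pb)) / dist S Pb).
    split; [reflexivity|field; exact Hs].
Qed.

Lemma drift_step_on_line L P L' : valid_line L' -> on_line (drift_step L P L') L'.
Proof.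
  intros HL'; destruct (drift_step_cases L P L' HL') as [[_ ->]|[Hd [mu [-> _]]]].
  - apply proj_on_line, HL'.
  - apply lerp_on_line; [apply (inter_on_line L L' Hd) | apply proj_on_line, HL'].
Qed.

Lemma drift_bound_nonparallel L' S P A' lam mu :
  valid_line L' -> on_line S L' -> on_line A' L' ->
  mu * dist S (proj L' P)
    = dist S (proj L' P) - drift_shift (dist S P) (dist S (proj L' P)) (dist P (proj L' P)) ->
  dist P (lerp S (proj L' P) mu) + sqrt 3 * dist (lerp S (proj L' P) mu) A'
  <= sqrt 3 * dist P (lerp S P lam) + 3 * dist (lerp S P lam) A'.
Proof.
  intros HL' HS HA' Hmu.
  apply (step_bound_of_proj_bound L'); [exact HL' | exact HA' |].
  rewrite (proj_lerp L' S P lam HL' HS).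
  set (Pb := proj L' P) in *.
  assert (HPb : on_line Pb L') by (apply proj_on_line, HL').
  set (P' := lerp S Pb mu).
  assert (HP' : on_line P' L') by (apply lerp_on_line; assumption).
  set (r := dist S P) in *; set (s := dist S Pb) in *; set (h := dist P Pb) in *.
  set (x := drift_shift r s h) in *.
  assert (Hpyth : r ^ 2 = s ^ 2 + h ^ 2) by (apply (dist_proj_pythagoras L'); assumption).
  assert (Hr : 0 <= r) by apply dist_nonneg; assert (Hs : 0 <= s) by apply dist_nonneg;
    assert (Hh : 0 <= h) by apply dist_nonneg.
  assert (HPA : dist P (lerp S P lam) = Rabs (1 - lam) * r)
    by (apply dist_scale; unfold sqdist, lerp; cbn; ring).
  assert (HAAb : dist (lerp S P lam) (lerp S Pb lam) = Rabs lam * h)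
    by (apply dist_scale; unfold sqdist, lerp; cbn; ring).
  assert (HP'Ab : dist P' (lerp S Pb lam) = Rabs (lam * s - (s - x))).
  { replace (lam * s - (s - x)) with ((lam - mu) * s) by lra.
    rewrite Rabs_mult, (Rabs_pos_eq s Hs); apply dist_scale; unfold P', sqdist, lerp; cbn; ring. }
  assert (HPP' : dist P P' = sqrt (h ^ 2 + x ^ 2)).
  { rewrite dist_sqdist, (sqdist_proj L' P P' HL' HP'), <- !dist_sq; fold Pb h.
    replace (dist Pb P') with (Rabs (1 - mu) * s)
      by (symmetry; apply dist_scale; unfold P', sqdist, lerp; cbn; ring).
    rewrite Rpow_mult_distr, pow2_abs, <- Rpow_mult_distr.
    replace ((1 - mu) * s) with x by lra; reflexivity. }
  rewrite HPA, HAAb, HP'Ab, HPP'.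
  pose proof (drift_scalar_bound r s h Hs Hh Hr Hpyth lam); fold x in H.
  lra.
Qed.

Lemma drift_step_bound L L' P A A' :
  valid_line L -> valid_line L' -> on_line P L -> on_line A L -> on_line A' L' ->
  dist P (drift_step L P L') + sqrt 3 * dist (drift_step L P L') A'
  <= sqrt 3 * dist P A + 3 * dist A A'.
Proof.
  intros HL HL' HP HA HA'.
  pose proof (one_le_sqrt 2 ltac:(lra)); pose proof (one_le_sqrt 3 ltac:(lra)).
  destruct (drift_step_cases L P L' HL') as [[Hd ->]|[Hd [mu [-> Hmu]]]].
  - apply (step_bound_of_proj_bound L'); [exact HL' | exact HA' |].
    destruct (dist_proj_parallel L L' P A HL HL' Hd HP HA) as [-> ->].
    assert (0 <= (sqrt 2 * sqrt 3 - 1) * dist A (proj L' A))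
      by (apply Rmult_le_pos; [nra | apply dist_nonneg]).
    lra.
  - destruct (inter_on_line L L' Hd) as [HSL HSL'].
    set (S := inter L L') in *.
    destruct (point_eq_dec P S) as [->|HPS].
    + rewrite (proj_on_line_id L' S HL' HSL'), lerp_same, dist_self in *.
      pose proof (dist_triangle S A A'); pose proof (dist_nonneg A A').
      assert (sqrt 3 <= 3) by (pose proof (sqrt_sqrt 3 ltac:(lra)); nra).
      nra.
    + destruct (on_line_lerp L S P A HL HSL HP HA HPS) as [lam ->].
      apply drift_bound_nonparallel; assumption.
Qed.

Section DriftAmortized.

Variables (P0 : point) (L0 : line) (X : nat -> line) (m : nat) (A : nat -> point).
Hypotheses (HL0 : valid_line L0) (HP0 : on_line P0 L0)
  (HX : forall t, (1 <= t <= m)%nat -> valid_line (X t))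
  (HA0 : A 0%nat = P0) (HA : forall t, (1 <= t <= m)%nat -> on_line (A t) (X t)).

Local Notation line_at n := (fst (drift_state L0 P0 X n)).
Local Notation pos := (drift_pos L0 P0 X).

Lemma drift_state_invariant n : (n <= m)%nat ->
  valid_line (line_at n) /\ on_line (pos n) (line_at n) /\ on_line (A n) (line_at n).
Proof.
  destruct n as [|n]; intros Hn.
  - rewrite HA0; repeat split; assumption.
  - assert (HXn : valid_line (X (S n))) by (apply HX; lia).
    repeat split; [exact HXn | apply drift_step_on_line, HXn | apply HA; lia].
Qed.

Lemma drift_amortized_bound n : (n <= m)%nat ->
  path_cost pos n + sqrt 3 * dist (pos n) (A n) <= 3 * path_cost A n.
Proof.
  induction n as [|n IH]; intros Hn.
  - cbn; rewrite HA0; unfold drift_pos; cbn; rewrite dist_self; lra.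
  - destruct (drift_state_invariant n ltac:(lia)) as (Hvalid & Hpos & HAn).
    pose proof (drift_step_bound _ (X (S n)) _ _ (A (S n)) Hvalid
                  ltac:(apply HX; lia) Hpos HAn ltac:(apply HA; lia)).
    specialize (IH ltac:(lia)).
    unfold drift_pos in *; cbn [path_cost drift_state fst snd] in *.
    lra.
Qed.

End DriftAmortized.

Theorem mainTheorem1 :
  forall (P0 : point) (L0 : line) (X : nat -> line) (m : nat),
    valid_line L0 -> on_line P0 L0 ->
    (forall t, (1 <= t <= m)%nat -> valid_line (X t)) ->
    forall A : nat -> point,
      A 0%nat = P0 ->
      (forall t, (1 <= t <= m)%nat -> on_line (A t) (X t)) ->
      path_cost (drift_pos L0 P0 X) m <= 3 * path_cost A m.
Proof.
  intros P0 L0 X m HL0 HP0 HX A HA0 HA.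
  pose proof (drift_amortized_bound P0 L0 X m A HL0 HP0 HX HA0 HA m (le_n m)).
  pose proof (dist_nonneg (drift_pos L0 P0 X m) (A m)); pose proof (sqrt_pos 3).
  nra.
Qed.
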